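(* Let $I,J\subseteq\mathbb{R}$ be (possibly unbounded) intervals and let $f:I\times J\to\mathbb{R}$ be such that $\int f\,d\alpha=\int f\,d\beta$ whenever $\alpha$ and $\beta$ are competitors concentrated on $I\times J$. Then $f$ admits a representation $f(x,y)=\phi(x)+\psi(y)+k(x)y$ for some functions $\phi,k$ on $I$ and $\psi$ on $J$.
   Context: For a finite measure $\alpha$ on $\mathbb{R}^2$ write $\alpha_0,\alpha_1$ for its marginals and $(\alpha_x)_x$ for a disintegration with respect to $\alpha_0$. Two finite measures $\alpha,\beta$ on $\mathbb{R}^2$ are competitors if they have the same first and second marginals and for $\alpha_0$-a.e. $x$, $\int y\,\alpha_x(dy)=\int y\,\beta_x(dy)$. *)

From HB Require Import structures.
From mathcomp Require Import all_boot all_order all_algebra.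
From mathcomp Require Import all_classical all_reals all_analysis.
From mathcomp Require Import measurable_realfun lebesgue_measure lebesgue_integral.
Set Implicit Arguments. Unset Strict Implicit. Unset Printing Implicit Defensive.
Import Order.TTheory GRing.Theory Num.Theory.
Local Open Scope classical_set_scope.
Local Open Scope ring_scope.
Local Open Scope ereal_scope.

Section competitors.
Variable R : realType.

Definition marg1 (a : set (R * R)%type -> \bar R) : set R -> \bar R :=
  pushforward a fst.
Definition marg2 (a : set (R * R)%type -> \bar R) : set R -> \bar R :=
  pushforward a snd.

Definition is_disintegration (a : set (R * R)%type -> \bar R)
    (k : R -> {measure set R -> \bar R}) : Prop :=
  (forall B : set R, measurable B -> measurable_fun [set: R] (k ^~ B)) /\
  (forall A B : set R, measurable A -> measurable B ->
     a (A `*` B) = \int[marg1 a]_(x in A) k x B).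

Definition bary (m : set R -> \bar R) : \bar R := \int[m]_y y%:E.

Definition competitors (a b : set (R * R)%type -> \bar R) : Prop :=
  (forall A : set R, measurable A -> marg1 a A = marg1 b A) /\
  (forall A : set R, measurable A -> marg2 a A = marg2 b A) /\
  exists ka kb : R -> {measure set R -> \bar R},
    is_disintegration a ka /\ is_disintegration b kb /\
    {ae marg1 a, forall x, bary (ka x) = bary (kb x)}.

Definition concentrated (a : set (R * R)%type -> \bar R) (I J : interval R) : Prop :=
  a (~` [set z | z.1 \in I /\ z.2 \in J]) = 0.

End competitors.

(* The hypothesis is tested on competitors built from a two-point law.  For
   y1 < y2 < y3 in J put t = (y3 - y2) / (y3 - y1) and
   m = t d_{y1} + (1 - t) d_{y3}, whose barycentre is y2.  For x, x' in I the
   measures  d_x (x) m + d_{x'} (x) d_{y2}  and  d_x (x) d_{y2} + d_{x'} (x) m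
   have the same marginals and, above each abscissa, kernels with the same
   barycentre, so they are competitors.  Equating the integrals of f against
   them shows that y |-> f(x, y) - f(x', y) satisfies the three-point
   (collinearity) identity on J, hence is affine on J.  Taking x' = x0 fixed
   gives psi = f(x0, .) and, abscissa by abscissa, phi and k.
   Since f need not be measurable, integrals against finitely supported
   measures are computed by first restricting them to the support. *)

From HB Require Import structures.
From mathcomp Require Import all_boot all_order all_algebra.
From mathcomp Require Import all_classical all_reals all_analysis.
From mathcomp Require Import measurable_realfun lebesgue_measure lebesgue_integral.
From mathcomp Require Import ring lra.
Set Implicit Arguments.
Unset Strict Implicit.
Unset Printing Implicit Defensive.
Import Order.TTheory GRing.Theory Num.Theory.
Local Open Scope classical_set_scope.
Local Open Scope ring_scope.

Section integral_conull.
Local Open Scope ereal_scope.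
Context d (T : measurableType d) (R : realType).
Variables (mu : {measure set T -> \bar R}) (S : set T) (mS : measurable S).
Hypothesis muS0 : mu (~` S) = 0.
Import HBNNSimple.

Let sintegral_proj (h : {nnsfun T >-> R}) :
  sintegral mu (proj_nnsfun h mS) = sintegral mu h.
Proof.
rewrite -mrestrict -integral_nnsfun// -integralT_nnsfun.
rewrite (@ge0_negligible_integral _ _ _ mu setT (~` S)) ?setTD ?setCK//.
- exact: measurableC.
- by apply/measurable_EFinP; exact: measurable_funTS.
- by move=> x _; rewrite lee_fin.
Qed.

(* [g] is not assumed measurable: the comparison is made directly on the
   simple functions below [g] that define the integral. *)
Let ge0_integral_conull (g : T -> \bar R) : (forall x, 0 <= g x) ->
  \int[mu]_x g x = \int[mu]_(x in S) g x.
Proof.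
move=> g0; rewrite !ge0_integralE// patch_setT.
apply/eqP; rewrite eq_le; apply/andP; split.
- apply: ge_ereal_sup => _ [h hg <-]; apply: ereal_sup_ubound => /=.
  exists (proj_nnsfun h mS); last exact: sintegral_proj.
  by move=> x; rewrite -mrestrict /patch; case: ifPn.
- apply: le_ereal_sup => _ [h hg <-]; exists h => // x.
  by apply: le_trans (hg x) _; rewrite /patch; case: ifPn.
Qed.

Lemma integral_conull (F : T -> \bar R) :
  \int[mu]_x F x = \int[mu]_(x in S) F x.
Proof. by rewrite integralE [RHS]integralE !ge0_integral_conull. Qed.

End integral_conull.

Lemma sum_eq_key {T : eqType} {R : pzSemiRingType} (s : seq (T * R))
    (c : T * R -> R) (pw : T * R) :
  uniq (unzip1 s) -> pw \in s ->
  \sum_(pw' <- s) c pw' * (pw'.1 == pw.1)%:R = c pw.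
Proof.
elim: s => // a s IH /= /andP[a_notin uniq_s].
have key_neq p : p \in s -> (p.1 == a.1) = false.
  by move=> ps; apply: contraNF a_notin => /eqP <-; exact: map_f.
rewrite big_cons in_cons => /predU1P[->|pws].
  rewrite eqxx mulr1 big1_seq ?addr0// => p /andP[_ /key_neq ->].
  by rewrite mulr0.
by rewrite IH// eq_sym key_neq// mulr0 add0r.
Qed.

Definition weighted_diracs d (T : measurableType d) (R : realType)
    (s : seq (T * R)) (A : set T) : \bar R :=
  (\sum_(pw <- s) pw.2%:E * \d_(pw.1) A)%E.

Section integral_weighted_diracs.
Local Open Scope ereal_scope.
Context d (T : measurableType d) (R : realType).
Hypothesis measurable_points : forall p : T, measurable [set p].
Variables (mu : {finite_measure set T -> \bar R}) (s : seq (T * R)).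
Hypothesis uniq_s : uniq (unzip1 s).
Hypothesis muE : forall A, measurable A -> mu A = weighted_diracs s A.

Lemma integral_weighted_diracs (f : T -> R) :
  \int[mu]_x (f x)%:E = (\sum_(pw <- s) pw.2 * f pw.1)%R%:E.
Proof.
pose S := [set` unzip1 s].
have mS : measurable S.
  have -> : S = \big[setU/set0]_(p <- unzip1 s) [set p].
    by rewrite -bigcup_seq bigcup_imset1 image_id.
  by apply: bigsetU_measurable => p _; exact: measurable_points.
have muS0 : mu (~` S) = 0.
  rewrite muE; last exact: measurableC.
  rewrite /weighted_diracs big1_seq// => pw /andP[_ pws].
  by rewrite diracE memNset ?mule0//; apply; exact: map_f.
have mass pw : pw \in s -> mu [set pw.1] = pw.2%:E.
  move=> pws; rewrite muE// /weighted_diracs.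
  under eq_bigr do rewrite diracE in_set1 -EFinM.
  by rewrite sumEFin (sum_eq_key (fun pw => pw.2)).
(* [G] is measurable and agrees with [f] on the support [S]. *)
pose G x := (\sum_(pw <- s) f pw.1 * \1_[set pw.1] x)%R.
rewrite (integral_conull mS muS0) (eq_integral (fun x => (G x)%:E)); last first.
  move=> _ /[!inE] /mapP[pw pws ->]; congr EFin.
  rewrite /G; under eq_bigr do rewrite indicE in_set1 eq_sym.
  by rewrite (sum_eq_key (fun pw => f pw.1)).
rewrite -(integral_conull mS muS0 (fun x => (G x)%:E)).
rewrite (eq_integral
  (fun x => \sum_(pw <- s) (f pw.1)%:E * (\1_[set pw.1] x)%:E)).
  2: by move=> x _; rewrite /G -sumEFin; apply: eq_bigr => pw _; rewrite EFinM.
have intG (pw : T * R) :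
    mu.-integrable setT (fun x => (f pw.1)%:E * (\1_[set pw.1] x)%:E).
  by apply: integrableZl => //; exact: integrable_indic.
rewrite (integral_sum measurableT intG) -sumEFin big_seq [RHS]big_seq.
apply: eq_bigr => pw pws; rewrite integralZl//; last exact: integrable_indic.
by rewrite integral_indic// setIT EFinM muleC; congr (_ * _); exact: mass.
Qed.

End integral_weighted_diracs.

Lemma measurable_set1_prod d1 d2 (T1 : measurableType d1)
    (T2 : measurableType d2) :
  (forall a : T1, measurable [set a]) -> (forall b : T2, measurable [set b]) ->
  forall p : T1 * T2, measurable [set p].
Proof.
move=> mT1 mT2 [a b]; rewrite (_ : [set (a, b)] = [set a] `*` [set b]).
  exact: measurableX.
by apply/seteqP; split => [[? ?] [-> ->]|[? ?] [/= -> ->]].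
Qed.

Section measure_add_finite.
Context d (T : measurableType d) (R : realType).
Variables (m1 m2 : {finite_measure set T -> \bar R}).

Let measure_add_fin : fin_num_fun (measure_add m1 m2).
Proof. by move=> A mA; rewrite measure_addE fin_numD !fin_num_measure. Qed.

HB.instance Definition _ := Measure.on (measure_add m1 m2).
HB.instance Definition _ :=
  Measure_isFinite.Build _ _ _ (measure_add m1 m2) measure_add_fin.

End measure_add_finite.

Section column.
Local Open Scope ereal_scope.
Context d1 d2 (T1 : measurableType d1) (T2 : measurableType d2) (R : realType).
Variables (x : T1) (m : {measure set T2 -> \bar R}).

(* [column x m] is the product measure [\d_x \x m]. *)
Definition column : set (T1 * T2) -> \bar R := pushforward m (pair x).

(* The library's pushforward instance is parameterized by a measurability
   proof, which cannot be inferred. *)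
HB.instance Definition _ := Measure.copy column
  (measure_function_pushforward__canonical__measure_function_Measure m
    (pair1_measurable x)).

Lemma column_setX A B : column (A `*` B) = \d_x A * m B.
Proof.
rewrite diracE /column /pushforward; have [xA|xA] := boolP (x \in A).
  rewrite mul1e (_ : _ @^-1` _ = B)//.
  by apply/seteqP; split => [y [] //|y By]; split => //; exact: set_mem.
rewrite mul0e (_ : _ @^-1` _ = set0) ?measure0//.
by apply/seteqP; split => // y [/mem_set Ax _]; rewrite Ax in xA.
Qed.

Lemma column_setCX (P : set T1) (Q : set T2) :
  P x -> column (~` (P `*` Q)) = m (~` Q).
Proof.
move=> Px; rewrite /column /pushforward; congr (m _).
by apply/seteqP; split => [y + Qy|y + [_ Qy]]; apply.
Qed.

Lemma column_weighted_diracs (s : seq (T2 * R)) :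
  (forall A, measurable A -> m A = weighted_diracs s A) ->
  forall A, measurable A ->
    column A = weighted_diracs [seq ((x, pw.1), pw.2) | pw <- s] A.
Proof.
move=> mE A mA; rewrite /column /pushforward mE; last first.
  by rewrite -[X in measurable X]setTI; exact: pair1_measurable.
by rewrite /weighted_diracs big_map; apply: eq_bigr => pw _; rewrite !diracE.
Qed.

End column.
Arguments column : simpl never.

Section column_finite.
Context d1 d2 (T1 : measurableType d1) (T2 : measurableType d2) (R : realType).
Variables (x : T1) (m : {finite_measure set T2 -> \bar R}).

Let column_fin : fin_num_fun (column x m).
Proof.
move=> A mA; apply: fin_num_measure; rewrite -[X in measurable X]setTI.
exact: pair1_measurable.
Qed.

HB.instance Definition _ :=
  Measure_isFinite.Build _ _ _ (column x m) column_fin.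

End column_finite.

Section two_columns.
Local Open Scope ereal_scope.
Context (R : realType).
Variables (x x' : R) (m n : {measure set R -> \bar R}).

Lemma marg1_columns : m setT = 1 -> n setT = 1 ->
  marg1 (measure_add (column x m) (column x' n)) = measure_add \d_x \d_x'.
Proof.
move=> m1 n1; apply/funext => A; rewrite /marg1 /pushforward !measure_addE /=.
by rewrite -!setXT !column_setX m1 n1 !mule1.
Qed.

Lemma marg2_columns :
  marg2 (measure_add (column x m) (column x' n)) = measure_add m n.
Proof.
apply/funext => A; rewrite /marg2 /pushforward !measure_addE /=.
by rewrite -!setTX !column_setX !diracT !mul1e.
Qed.

Lemma columns_disintegration : x != x' -> m setT = 1 -> n setT = 1 ->
  is_disintegration (measure_add (column x m) (column x' n))
    (fun z => if z == x then m else n).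
Proof.
move=> xx' m1 n1.
have mk B : measurable_fun setT (fun z => (if z == x then m else n) B).
  rewrite (_ : (fun z => _) = fun z => if z == x then m B else n B).
    by apply: measurable_fun_ifT => //; exact: measurable_fun_eqr.
  by apply/funext => z; case: ifP.
split => // A B mA mB.
rewrite marg1_columns// ge0_integral_measure_add//.
  2: exact: measurable_funTS.
rewrite !integral_dirac//; try exact: measurable_funTS.
by rewrite eqxx eq_sym (negbTE xx') measure_addE /= !column_setX.
Qed.

Lemma columns_concentrated (I J : interval R) :
  x \in I -> x' \in I ->
  m (~` [set y | y \in J]) = 0 -> n (~` [set y | y \in J]) = 0 ->
  concentrated (measure_add (column x m) (column x' n)) I J.
Proof.
move=> xI x'I m0 n0; rewrite /concentrated.
rewrite (_ : [set z | _] = [set u | u \in I] `*` [set y | y \in J])//.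
by rewrite measure_addE /= !column_setCX// m0 n0 adde0.
Qed.

End two_columns.

Lemma competitors_swap_columns (R : realType) (x x' : R)
    (m n : {measure set R -> \bar R}) :
  x != x' -> m setT = 1%E -> n setT = 1%E -> bary m = bary n ->
  competitors (measure_add (column x m) (column x' n))
              (measure_add (column x n) (column x' m)).
Proof.
move=> xx' m1 n1 bary_mn; split; [|split].
- by move=> A _; rewrite !marg1_columns.
- by move=> A _; rewrite !marg2_columns !measure_addE addeC.
exists (fun z => if z == x then m else n), (fun z => if z == x then n else m).
split; first exact: columns_disintegration.
split; first exact: columns_disintegration.
by rewrite marg1_columns//; apply: aeW => z; case: ifP.
Qed.

Lemma integral_columns_weighted_diracs (R : realType) (x x' : R)
    (m n : {finite_measure set R -> \bar R}) (sm sn : seq (R * R))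
    (F : R -> R -> R) :
  x != x' -> uniq (unzip1 sm) -> uniq (unzip1 sn) ->
  (forall A, measurable A -> m A = weighted_diracs sm A) ->
  (forall A, measurable A -> n A = weighted_diracs sn A) ->
  (\int[measure_add (column x m) (column x' n)]_z (F z.1 z.2)%:E)%E =
  (\sum_(pw <- sm) pw.2 * F x pw.1 + \sum_(pw <- sn) pw.2 * F x' pw.1)%:E.
Proof.
move=> xx' uniq_sm uniq_sn mE nE.
have mR2 := measurable_set1_prod (@measurable_set1 R) (@measurable_set1 R).
rewrite (@integral_weighted_diracs _ _ _ mR2 _
  ([seq ((x, pw.1), pw.2) | pw <- sm] ++ [seq ((x', pw.1), pw.2) | pw <- sn])).
- by rewrite big_cat !big_map.
- have -> : unzip1 ([seq ((x, pw.1), pw.2) | pw <- sm] ++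
                     [seq ((x', pw.1), pw.2) | pw <- sn]) =
             map (pair x) (unzip1 sm) ++ map (pair x') (unzip1 sn).
    by rewrite /unzip1 map_cat -!map_comp.
  have pair_inj z : injective (@pair R R z) by move=> a b [].
  rewrite cat_uniq !(map_inj_uniq (pair_inj _)) uniq_sm uniq_sn andbT.
  apply/hasP => -[_ /mapP[y _ ->] /mapP[y' _ [x'x _]]].
  by move: xx'; rewrite x'x eqxx.
- move=> A mA /=; rewrite measure_addE /= (column_weighted_diracs x mE)//.
  by rewrite (column_weighted_diracs x' nE)// /weighted_diracs big_cat.
Qed.

Definition competitor_invariant (R : realType) (I J : interval R)
    (f : R -> R -> R) : Prop :=
  forall a b : {finite_measure set (R * R)%type -> \bar R},
    concentrated a I J -> concentrated b I J -> competitors a b ->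
    (\int[a]_z (f z.1 z.2)%:E = \int[b]_z (f z.1 z.2)%:E)%E.

Section swap_columns_invariance.
Variables (R : realType) (I J : interval R) (f : R -> R -> R).
Hypothesis Hf : competitor_invariant I J f.
Variables (x x' : R) (m n : {finite_measure set R -> \bar R}).
Variables (sm sn : seq (R * R)).
Hypotheses (xI : x \in I) (x'I : x' \in I) (xx' : x != x').
Hypotheses (m1 : m setT = 1%E) (n1 : n setT = 1%E) (bary_mn : bary m = bary n).
Hypotheses (mJ : m (~` [set y | y \in J]) = 0%E)
           (nJ : n (~` [set y | y \in J]) = 0%E).
Hypotheses (uniq_sm : uniq (unzip1 sm)) (uniq_sn : uniq (unzip1 sn)).
Hypotheses (mE : forall A, measurable A -> m A = weighted_diracs sm A)
           (nE : forall A, measurable A -> n A = weighted_diracs sn A).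

Lemma competitor_invariant_swap :
  \sum_(pw <- sm) pw.2 * f x pw.1 + \sum_(pw <- sn) pw.2 * f x' pw.1 =
  \sum_(pw <- sn) pw.2 * f x pw.1 + \sum_(pw <- sm) pw.2 * f x' pw.1.
Proof.
have := Hf (columns_concentrated xI x'I mJ nJ)
  (columns_concentrated xI x'I nJ mJ)
  (competitors_swap_columns xx' m1 n1 bary_mn).
rewrite (integral_columns_weighted_diracs f xx' uniq_sm uniq_sn mE nE).
by rewrite (integral_columns_weighted_diracs f xx' uniq_sn uniq_sm nE mE); case.
Qed.

End swap_columns_invariance.

Section two_point_law.
Variables (R : realType) (y1 y3 t : R).
Hypotheses (t_ge0 : 0 <= t) (t_le1 : 0 <= 1 - t).

Definition two_point : {finite_measure set R -> \bar R} :=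
  measure_add (mscale (NngNum t_ge0) \d_y1) (mscale (NngNum t_le1) \d_y3).

Lemma two_pointE A : two_point A = weighted_diracs [:: (y1, t); (y3, 1 - t)] A.
Proof.
by rewrite /= measure_addE /= /mscale /weighted_diracs !big_cons big_nil adde0.
Qed.

Lemma two_point_setT : two_point setT = 1%E.
Proof.
rewrite two_pointE /weighted_diracs !big_cons big_nil !diracE !in_setT/=.
by rewrite !mule1 adde0 -EFinD addrC subrK.
Qed.

Lemma bary_two_point : y1 != y3 -> bary two_point = (t * y1 + (1 - t) * y3)%:E.
Proof.
move=> y13; rewrite /bary (@integral_weighted_diracs _ _ _ (@measurable_set1 R)
  _ [:: (y1, t); (y3, 1 - t)]) => [|/=|A _]; last exact: two_pointE.
- by rewrite !big_cons big_nil addr0.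
- by rewrite inE y13.
Qed.

Lemma two_point_compl (J : interval R) : y1 \in J -> y3 \in J ->
  two_point (~` [set y | y \in J]) = 0%E.
Proof.
move=> y1J y3J; rewrite two_pointE /weighted_diracs !big_cons big_nil !diracE.
by rewrite !memNset ?mule0 ?adde0//=.
Qed.

End two_point_law.

Definition collinear_on (R : numDomainType) (D : set R) (g : R -> R) : Prop :=
  forall y1 y2 y3, D y1 -> D y2 -> D y3 -> y1 < y2 < y3 ->
    (y3 - y1) * g y2 = (y3 - y2) * g y1 + (y2 - y1) * g y3.

Section collinear.
Variables (R : realFieldType) (D : set R) (g : R -> R).
Hypothesis gcol : collinear_on D g.

Lemma collinear_on_interpolate u v y : D u -> D v -> D y -> u < v ->
  (v - u) * g y = (v - y) * g u + (y - u) * g v.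
Proof.
move=> Du Dv Dy uv; have [yu|uy|->] := ltgtP y u; last by ring.
  by have := gcol Dy Du Dv; rewrite yu uv => /(_ isT); lra.
have [yv|vy|->] := ltgtP y v; last by ring.
  by apply: gcol; rewrite ?uy.
by have := gcol Du Dv Dy; rewrite uv vy => /(_ isT); lra.
Qed.

Lemma collinear_on_affine : exists a b, forall y, D y -> g y = a + b * y.
Proof.
have [[u [v [Du Dv uv]]]|no_pair] :=
  pselect (exists u v, [/\ D u, D v & u < v]).
  exists (g u - (g v - g u) / (v - u) * u), ((g v - g u) / (v - u)) => y Dy.
  have vu : v - u != 0 by rewrite subr_eq0 gt_eqF.
  by apply: (mulfI vu); rewrite (collinear_on_interpolate Du Dv Dy uv); field.
have [[y0 Dy0]|noD] := pselect (exists y0, D y0); last first.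
  by exists 0, 0 => y Dy; exfalso; apply: noD; exists y.
exists (g y0), 0 => y Dy; rewrite mul0r addr0.
have [yy0|y0y|->//] := ltgtP y y0; exfalso; apply: no_pair.
  by exists y, y0.
by exists y0, y.
Qed.

End collinear.

Lemma competitor_invariant_collinear (R : realType) (I J : interval R)
    (f : R -> R -> R) (x x' : R) :
  competitor_invariant I J f -> x \in I -> x' \in I ->
  collinear_on [set y | y \in J] (fun y => f x y - f x' y).
Proof.
move=> Hf xI x'I y1 y2 y3 /= y1J y2J y3J /andP[y12 y23].
have [<-|xx'] := eqVneq x x'; first by rewrite !subrr !mulr0 addr0.
have y13 := lt_trans y12 y23.
have y31 : y3 - y1 != 0 by rewrite subr_eq0 gt_eqF.
pose t := (y3 - y2) / (y3 - y1).
have t_ge0 : 0 <= t by rewrite divr_ge0// subr_ge0 ltW.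
have t_le1 : 0 <= 1 - t.
  rewrite (_ : 1 - t = (y2 - y1) / (y3 - y1)) ?divr_ge0 ?subr_ge0 ?ltW//.
  by rewrite /t; field.
pose n : {finite_measure set R -> \bar R} := \d_y2.
have nE A : measurable A -> n A = weighted_diracs [:: (y2, 1)] A.
  by move=> _; rewrite /weighted_diracs big_cons big_nil mul1e adde0.
have n1 : n setT = 1%E by rewrite /n /= diracT.
have nJ : n (~` [set y | y \in J]) = 0%E.
  by rewrite /n /= diracE memNset//=; apply.
have bary_mn : bary (two_point y1 y3 t_ge0 t_le1) = bary n.
  rewrite bary_two_point ?lt_eqF// /bary.
  rewrite (integral_weighted_diracs (@measurable_set1 R) _ nE)//; congr EFin.
  by rewrite big_cons big_nil /= addr0 mul1r /t; field.
have := competitor_invariant_swap Hf xI x'I xx' (two_point_setT _ _ _ _) n1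
  bary_mn (two_point_compl _ _ y1J y3J) nJ _ _
  (fun A _ => two_pointE _ _ _ _ A) nE.
rewrite /= inE lt_eqF// !big_cons !big_nil /= !addr0 !mul1r => /(_ isT isT) Hab.
have -> : f x y2 - f x' y2 =
    t * (f x y1 - f x' y1) + (1 - t) * (f x y3 - f x' y3) by lra.
by rewrite /t; field.
Qed.

Theorem lemma4p4 (R : realType) (I J : interval R) (f : R -> R -> R) :
  (forall a b : {finite_measure set (R * R)%type -> \bar R},
      concentrated a I J -> concentrated b I J -> competitors a b ->
      (\int[a]_z (f z.1 z.2)%:E = \int[b]_z (f z.1 z.2)%:E)%E) ->
  exists phi k psi : R -> R,
    forall x y, x \in I -> y \in J -> f x y = phi x + psi y + k x * y.
Proof.
move=> Hf.
have [[x0 x0I]|noI] := pselect (exists x0, x0 \in I); last first.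
  exists (fun=> 0), (fun=> 0), (fun=> 0) => x y xI.
  by exfalso; apply: noI; exists x.
have affine x : exists ab : R * R,
    x \in I -> forall y, y \in J -> f x y - f x0 y = ab.1 + ab.2 * y.
  have [xI|_] := boolP (x \in I); last by exists (0, 0).
  have := collinear_on_affine (competitor_invariant_collinear Hf xI x0I).
  move=> [a [b ab]].
  by exists (a, b) => _ y yJ; exact: ab.
have [ab abP] := choice affine.
exists (fun x => (ab x).1), (fun x => (ab x).2), (f x0) => x y xI yJ.
by rewrite -[f x y](subrK (f x0 y)) abP// addrAC.
Qed.
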